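(* Let $R$ be a DT ring. Then: (1) $er-re\in\Delta(R)$ for every idempotent $e\in R$ and every $r\in R$; (2) $fd+df\in\Delta(R)$ and $fd-df\in\Delta(R)$ for every $f\in\mathrm{Tr}(R)$ and every $d\in\Delta(R)$.
   Context: All rings are associative with identity; $U(R)$ is the group of units. $\Delta(R)=\{x\in R: x+u\in U(R)\text{ for all }u\in U(R)\}$. $\mathrm{Tr}(R)=\{x\in R: x^3=x\}$. A ring $R$ is a DT ring if every $r\in R$ can be written $r=e+d$ with $e\in\mathrm{Tr}(R)$ and $d\in\Delta(R)$. *)

From mathcomp Require Import all_boot all_algebra.
Set Implicit Arguments. Unset Strict Implicit. Unset Printing Implicit Defensive.
Import GRing.Theory.
Local Open Scope ring_scope.

Definition Delta (R : unitRingType) (x : R) : Prop :=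
  forall u : R, u \is a GRing.unit -> (x + u) \is a GRing.unit.

Definition Tr (R : unitRingType) (x : R) : Prop := x ^+ 3 = x.

Definition DT_ring (R : unitRingType) : Prop :=
  forall r : R, exists e d : R, [/\ Tr e, Delta d & r = e + d].

From mathcomp Require Import all_boot all_algebra.
Import GRing.Theory.
Set Implicit Arguments. Unset Strict Implicit. Unset Printing Implicit Defensive.
Local Open Scope ring_scope.

(* Both parts reduce to two facts: Delta(R) is stable under multiplication on
   either side by any difference of units, and in a DT ring every element of
   square zero lies in Delta(R).  For (1), e r - r e is the
   difference of the square-zero elements e r (1 - e) and (1 - e) r e.  For
   (2), a tripotent f is g - h with h = 1 - f^2 idempotent and g = f + h an
   involution, so f d +- d f = (g d +- d g) - (h d +- d h); here h d - d h is
   covered by (1) and h d + d h = (2h - 1) d + d - (h d - d h), with 2h - 1 an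
   involution. *)

Section DeltaClosure.
Variable R : unitRingType.
Implicit Types x y v b d : R.

Lemma DeltaD x y : Delta x -> Delta y -> Delta (x + y).
Proof. by move=> Dx Dy u Uu; rewrite -addrA; apply/Dx/Dy. Qed.

Lemma DeltaN x : Delta x -> Delta (- x).
Proof.
move=> Dx u Uu; rewrite -unitrN opprD opprK.
by apply: Dx; rewrite unitrN.
Qed.

Lemma DeltaB x y : Delta x -> Delta y -> Delta (x - y).
Proof. by move=> Dx Dy; apply/DeltaD/DeltaN. Qed.

Lemma Delta_unitMl v x : v \is a GRing.unit -> Delta x -> Delta (v * x).
Proof.
move=> Uv Dx u Uu; rewrite -[u](mulVKr Uv) -mulrDr unitrMr //.
by apply: Dx; rewrite unitrMl // unitrV.
Qed.

Lemma Delta_unitMr v x : v \is a GRing.unit -> Delta x -> Delta (x * v).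
Proof.
move=> Uv Dx u Uu; rewrite -[u](divrK Uv) -mulrDl unitrMl //.
by apply: Dx; rewrite unitrMr // unitrV.
Qed.

Definition Delta_multiplier x :=
  forall d, Delta d -> Delta (x * d) /\ Delta (d * x).

Lemma unit_Delta_multiplier v : v \is a GRing.unit -> Delta_multiplier v.
Proof. by move=> Uv d Dd; split; [apply: Delta_unitMl | apply: Delta_unitMr]. Qed.

Lemma Delta_multiplierB x y :
  Delta_multiplier x -> Delta_multiplier y -> Delta_multiplier (x - y).
Proof.
move=> Mx My d Dd; have [Dxd Ddx] := Mx d Dd; have [Dyd Ddy] := My d Dd.
by rewrite mulrBl mulrBr; split; apply: DeltaB.
Qed.

Lemma Delta_multiplier_subr1 v :
  v \is a GRing.unit -> Delta_multiplier (v - 1).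
Proof.
move=> Uv; apply: Delta_multiplierB; apply: unit_Delta_multiplier => //.
exact: unitr1.
Qed.

Lemma Delta_Delta_multiplier d : Delta d -> Delta_multiplier d.
Proof.
move=> Dd; rewrite -[d](addrK 1); apply: Delta_multiplier_subr1.
by apply: Dd; apply: unitr1.
Qed.

Lemma unit_1addr_sqr0 b : b * b = 0 -> 1 + b \is a GRing.unit.
Proof.
move=> b2; apply/unitrP; exists (1 - b).
by rewrite !(mulrBl, mulrBr, mulrDl, mulrDr) !(mulr1, mul1r) b2 ?subr0 ?addr0 addrK.
Qed.

Lemma sqr0_Delta_multiplier b : b * b = 0 -> Delta_multiplier b.
Proof.
move=> b2; rewrite -[b](addKr 1) addrC.
exact/Delta_multiplier_subr1/unit_1addr_sqr0.
Qed.

Lemma involution_unit v : v * v = 1 -> v \is a GRing.unit.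
Proof. by move=> v2; rewrite -(unitrX_pos _ (ltn0Sn 1)) expr2 v2 unitr1. Qed.

End DeltaClosure.

Section DTRing.
Variables (R : unitRingType) (DT_R : DT_ring R).
Implicit Types b d e h r : R.

(* Writing b = f + d with f tripotent, f = b - d multiplies Delta into itself,
   f^2 = d^2 - b d - d b lies in Delta, hence so does f = f * f^2. *)
Lemma sqr0_Delta b : b * b = 0 -> Delta b.
Proof.
move=> b2; have [f [d [f3 Dd bE]]] := DT_R b.
have Mb := sqr0_Delta_multiplier b2.
have Md := Delta_Delta_multiplier Dd.
have fE : f = b - d by rewrite bE addrK.
have Mf : Delta_multiplier f by rewrite fE; apply: Delta_multiplierB.
have Df2 : Delta (f * f).
  have -> : f * f = d * d - b * d - d * b.
    by rewrite fE !(mulrBl, mulrBr) b2 sub0r opprB addrCA addrA.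
  have [Dbd Ddb] := Mb d Dd.
  by apply: DeltaB => //; apply: DeltaB => //; exact: (Md d Dd).1.
have Df : Delta f by rewrite -f3 exprS expr2; exact: (Mf _ Df2).1.
by rewrite bE; apply: DeltaD.
Qed.

Lemma idem_commutator_Delta e r : e * e = e -> Delta (e * r - r * e).
Proof.
move=> e2.
have eCe : e * (1 - e) = 0 by rewrite mulrBr mulr1 e2 subrr.
have Cee : (1 - e) * e = 0 by rewrite mulrBl mul1r e2 subrr.
have -> : e * r - r * e = e * r * (1 - e) - (1 - e) * r * e.
  by rewrite mulrBr mulr1 !mulrBl mul1r opprB addrA subrK.
apply: DeltaB; apply: sqr0_Delta.
  by rewrite !mulrA -(mulrA _ (1 - e) e) Cee mulr0 !mul0r.
by rewrite !mulrA -(mulrA _ e (1 - e)) eCe mulr0 !mul0r.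
Qed.

Lemma idem_anticommutator_Delta h d :
  h * h = h -> Delta d -> Delta (h * d + d * h).
Proof.
move=> h2 Dd; pose w := h - (1 - h).
have w2 : w * w = 1.
  rewrite /w !(mulrBl, mulrBr) !(mulr1, mul1r) h2.
  by rewrite !subrr !subr0 addrAC subrr sub0r opprK addrC subrK.
have -> : h * d + d * h = w * d + d - (h * d - d * h).
  by rewrite /w mulrBl mulrBl mul1r opprB addrA subrK opprB addrAC addrA subrK.
apply: DeltaB; last exact: idem_commutator_Delta.
exact/DeltaD/Dd/Delta_unitMl/Dd/involution_unit.
Qed.

End DTRing.

Lemma tripotent_involutionB_idem (R : unitRingType) (f : R) : Tr f ->
  exists g h : R, [/\ g * g = 1, h * h = h & f = g - h].
Proof.
rewrite /Tr exprS expr2 => f3; pose h := 1 - f * f.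
have fh : f * h = 0 by rewrite mulrBr mulr1 f3 subrr.
have hf : h * f = 0 by rewrite mulrBl mul1r -mulrA f3 subrr.
have h2 : h * h = h by rewrite {1}/h mulrBl mul1r -mulrA fh mulr0 subr0.
have f2h : f * f + h = 1 by rewrite addrC subrK.
clearbody h; exists (f + h), h; split=> //; last by rewrite addrK.
by rewrite mulrDl !mulrDr fh hf h2 addr0 add0r.
Qed.

Theorem lemma2p6 (R : unitRingType) (hR : DT_ring R) :
  (forall e r : R, e * e = e -> Delta (e * r - r * e)) /\
  (forall f d : R, Tr f -> Delta d ->
     Delta (f * d + d * f) /\ Delta (f * d - d * f)).
Proof.
split=> [e r|f d Tf Dd]; first exact: idem_commutator_Delta.
have [g [h [g2 h2 ->]]] := tripotent_involutionB_idem Tf.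
have [Dgd Ddg] := unit_Delta_multiplier (involution_unit g2) Dd.
have Dcomm := idem_commutator_Delta hR d h2.
have Danti := idem_anticommutator_Delta hR h2 Dd.
rewrite !mulrBl !mulrBr; split.
  by rewrite addrACA -opprD; apply: DeltaB => //; apply: DeltaD.
rewrite opprD opprK addrACA [- (h * d) + _]addrC -(opprB (h * d)).
by apply: DeltaB => //; apply: DeltaB.
Qed.
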